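(* Let $n\ge3$ be an integer, let $(\eta_{ab})$ be a non-degenerate symmetric complex $n\times n$ matrix with inverse $(\eta^{ab})$, let $\mathscr{F}=\mathbb{C}[x^1,\dots,x^n]$ and $\mathscr{F}^+=\{\phi\in\mathscr{F}:\sum_{a,b}\eta^{ab}\partial_a\partial_b\phi=0\}$. Let $Z^\circ$ be the $\mathbb{C}$-algebra of operators on $\mathscr{F}$ generated by $$H=-\tfrac12\sum_a(x^a\partial_a+\partial_ax^a),\qquad \partial_a,\qquad \tilde x^a=x^a+\frac1{2H+4}\sum_{b,c}\eta_{bc}x^bx^c\,\partial^a\qquad(1\le a\le n).$$ Then each of these operators maps $\mathscr{F}^+$ into itself, so $\mathscr{F}^+$ is a $Z^\circ$-module, and $\mathscr{F}^+$ is irreducible as a $Z^\circ$-module.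
   Context: $\partial_a=\partial/\partial x^a$, $\partial^a=\sum_b\eta^{ab}\partial_b$. $H$ acts on homogeneous polynomials of degree $d$ by the scalar $-d-\frac n2$, and $(2H+4)^{-1}$ denotes the inverse of $2H+4$ on the (homogeneous, degree $\ge2$ when nonzero) polynomial $\sum_{b,c}\eta_{bc}x^bx^c\partial^a\psi$; explicitly $\tilde x^a\psi=x^a\psi+\frac1{2-2d-n}\sum_{b,c}\eta_{bc}x^bx^c\partial^a\psi$ for $\psi$ homogeneous of degree $d\ge1$ and $\tilde x^a\psi=x^a\psi$ for constant $\psi$. Irreducible means the only $Z^\circ$-invariant subspaces of $\mathscr{F}^+$ are $0$ and $\mathscr{F}^+$. *)

From HB Require Import structures.
From mathcomp Require Import all_boot all_order all_algebra.
From mathcomp Require Import Rstruct.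
From mathcomp.real_closed Require Import complex.
From mathcomp.multinomials Require Import mpoly.
Set Implicit Arguments. Unset Strict Implicit. Unset Printing Implicit Defensive.
Import Order.TTheory GRing.Theory Num.Theory.
Local Open Scope ring_scope.

Notation C := (complex Rdefinitions.R).
Check (1 : C).

Definition Fpoly (n : nat) := {mpoly C[n]}.

Section Ops.
Variables (n : nat) (eta : 'M[C]_n).

Definition etainv : 'M[C]_n := invmx eta.

Definition dpart (a : 'I_n) (p : Fpoly n) : Fpoly n := mderiv a p.

Definition dup (a : 'I_n) (p : Fpoly n) : Fpoly n :=
  \sum_(b < n) etainv a b *: dpart b p.

Definition laplace (p : Fpoly n) : Fpoly n :=
  \sum_(a < n) \sum_(b < n) etainv a b *: dpart a (dpart b p).

Definition harmonic (p : Fpoly n) : Prop := laplace p = 0.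

Definition Hop (p : Fpoly n) : Fpoly n :=
  (- (1 / 2%:R)) *: \sum_(a < n) ('X_a * dpart a p + dpart a ('X_a * p)).

(* (2H+4)^{-1}: H acts on degree-d homogeneous polynomials by -d - n/2,
   so on each monomial of degree d we divide by 2(-d-n/2)+4. *)
Definition inv2H4 (p : Fpoly n) : Fpoly n :=
  \sum_(m <- msupp p)
     (p@_m / (2%:R * (- (mdeg m)%:R - n%:R / 2%:R) + 4%:R)) *: 'X_[m].

Definition xtilde (a : 'I_n) (p : Fpoly n) : Fpoly n :=
  'X_a * p + inv2H4 (\sum_(b < n) \sum_(c < n) eta b c *: ('X_b * 'X_c * dup a p)).

Inductive inZ : (Fpoly n -> Fpoly n) -> Prop :=
  | inZ_H : inZ Hop
  | inZ_d a : inZ (dpart a)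
  | inZ_xt a : inZ (xtilde a)
  | inZ_id : inZ id
  | inZ_scale (c : C) T : inZ T -> inZ (fun p => c *: T p)
  | inZ_add T1 T2 : inZ T1 -> inZ T2 -> inZ (fun p => T1 p + T2 p)
  | inZ_comp T1 T2 : inZ T1 -> inZ T2 -> inZ (fun p => T1 (T2 p)).

Definition Zinvariant_subspace (S : Fpoly n -> Prop) : Prop :=
  [/\ S 0,
      (forall p q, S p -> S q -> S (p + q)),
      (forall (c : C) p, S p -> S (c *: p)),
      (forall p, S p -> harmonic p)
    & (forall T p, inZ T -> S p -> S (T p))].

Definition Fplus_irreducible : Prop :=
  forall S, Zinvariant_subspace S ->
    (forall p, S p <-> p = 0) \/ (forall p, S p <-> harmonic p).

End Ops.

From Pilot Require Import Defs.
From HB Require Import structures.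
From mathcomp Require Import all_boot all_order all_algebra.
From mathcomp Require Import Rstruct.
From mathcomp.real_closed Require Import complex.
From mathcomp.multinomials Require Import mpoly.
From mathcomp.algebra_tactics Require Import ring.
From Stdlib Require Import Classical.
Set Implicit Arguments. Unset Strict Implicit. Unset Printing Implicit Defensive.
Import GRing.Theory Num.Theory.
Local Open Scope ring_scope.

(* H, d_a and (2H+4)^-1 are degree multipliers: on the homogeneous component
   of degree d they act by scalars (H by -d - n/2), while the Laplacian lowers
   degrees by 2; so H and d_a preserve harmonic polynomials.  For x~^a one has
   Lap(x^a p) = 2 d^a p, and Lap(r2 q) = 2 (2E + n) q for harmonic q, where
   r2 = sum eta_bc x^b x^c and E is the Euler operator.  As 2H+4 acts on r2 q
   of degree deg q + 2 by -(2 deg q + n), the correction term of x~^a p has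
   Laplacian -2 d^a p, cancelling Lap(x^a p).
   For irreducibility: a nonzero invariant subspace contains 1 (differentiate
   down to a nonzero constant), and then every homogeneous harmonic h by
   induction on the degree, because sum_a x~^a d_a h = E h = (deg h) h, the
   correction terms adding up to (2H+4)^-1 (r2 Lap h) = 0. *)

Section DegreeMultiplier.
Variables (R : comRingType) (n : nat).
Implicit Types (p q : {mpoly R[n]}) (f g : nat -> R) (m : 'X_{1..n}).

Definition degmul f p : {mpoly R[n]} :=
  \sum_(m <- msupp p) (p@_m * f (mdeg m)) *: 'X_[m].

Lemma mcoeff_degmul f p m : (degmul f p)@_m = p@_m * f (mdeg m).
Proof.
rewrite /degmul raddf_sum /=.
under eq_bigr do rewrite mcoeffZ mcoeffX.
have [m_p|m_Np] := boolP (m \in msupp p).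
  rewrite (bigD1_seq m) ?msupp_uniq //= eqxx mulr1 big1 ?addr0 // => k /negbTE.
  by rewrite eq_sym => ->; rewrite mulr0.
rewrite (memN_msupp_eq0 m_Np) mul0r big1_seq // => k /andP[_ k_p].
by case: eqP m_Np => [<-|_]; [rewrite k_p | rewrite mulr0].
Qed.

Lemma degmul_is_linear f : linear (degmul f).
Proof.
move=> c p q; apply/mpolyP => m.
by rewrite mcoeffD mcoeffZ !mcoeff_degmul mcoeffD mcoeffZ mulrDl mulrA.
Qed.

HB.instance Definition _ f := GRing.isLinear.Build R {mpoly R[n]} {mpoly R[n]}
  _ (degmul f) (degmul_is_linear f).

Lemma eq_degmul f g p : f =1 g -> degmul f p = degmul g p.
Proof. by move=> eq_fg; apply/mpolyP => m; rewrite !mcoeff_degmul eq_fg. Qed.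

Lemma degmulK f g p : degmul f (degmul g p) = degmul (fun d => g d * f d) p.
Proof. by apply/mpolyP => m; rewrite !mcoeff_degmul mulrA. Qed.

Lemma degmul_cst c p : degmul (fun=> c) p = c *: p.
Proof. by apply/mpolyP => m; rewrite mcoeff_degmul mcoeffZ mulrC. Qed.

Lemma degmulDl f g p : degmul f p + degmul g p = degmul (fun d => f d + g d) p.
Proof. by apply/mpolyP => m; rewrite mcoeffD !mcoeff_degmul mulrDr. Qed.

Lemma mderiv_degmul i f p :
  mderiv i (degmul f p) = degmul (fun d => f d.+1) (mderiv i p).
Proof.
apply/mpolyP => m; rewrite mcoeff_mderiv !mcoeff_degmul mcoeff_mderiv.
by rewrite mdegD mdeg1 addn1 mulrnAl.
Qed.

Lemma msupp_mderiv i p m : m \in msupp (mderiv i p) -> (m + U_(i))%MM \in msupp p.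
Proof.
by rewrite !mcoeff_msupp mcoeff_mderiv; apply: contra => /eqP ->; rewrite mul0rn.
Qed.

Lemma mderiv_homog d i p :
  p \is d.+1.-homog for mdeg -> mderiv i p \is d.-homog for mdeg.
Proof.
move=> p_homog; apply/dhomogP => m /msupp_mderiv /(dhomog_mf p_homog).
by rewrite /= mdegD mdeg1 addn1 => -[].
Qed.

Lemma degmul_homog d f p : p \is d.-homog for mdeg -> degmul f p = f d *: p.
Proof.
move=> p_homog; apply/mpolyP => m; rewrite mcoeff_degmul mcoeffZ mulrC.
have [<-//|ne_md] := eqVneq (mdeg m) d.
by rewrite (dhomog_nemf_coeff p_homog ne_md) !mulr0.
Qed.

Lemma pihomog_degmul d p : pihomog mdeg d p = degmul (fun e => (e == d)%:R) p.
Proof.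
rewrite pihomogE /degmul big_mkcond /=; apply: eq_bigr => m _.
by case: eqP; rewrite ?mulr1 ?mulr0 ?scale0r.
Qed.

Definition euler p : {mpoly R[n]} := \sum_(i < n) 'X_i * mderiv i p.

Lemma mcoeffXM i q m :
  ('X_i * q)@_m = if (0 < m i)%N then q@_(m - U_(i))%MM else 0.
Proof.
rewrite -commr_mpolyX.
case: ifPn => [m_i_gt0|]; last rewrite -eqn0Ngt => /eqP m_i0.
  have U_le_m : (U_(i) <= m)%MM by rewrite lep1mP -lt0n.
  by rewrite -{1}(submK U_le_m) addmC mcoeffMX.
rewrite [q]mpolyE mulr_suml raddf_sum big1 //= => k _.
rewrite -scalerAl -mpolyXD mcoeffZ mcoeffX; case: eqP => [km|]; last by rewrite mulr0.
by move: m_i0; rewrite -km mnmDE mnm1E eqxx addn1.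
Qed.

Lemma euler_degmul p : euler p = degmul (fun d => d%:R) p.
Proof.
apply/mpolyP => m; rewrite mcoeff_degmul /euler raddf_sum /=.
transitivity (\sum_(i < n) p@_m *+ m i); last by rewrite sumrMnr -mdegE mulr_natr.
apply: eq_bigr => i _; rewrite mcoeffXM.
case: ifPn => [m_i_gt0|]; last by rewrite -eqn0Ngt => /eqP ->.
have U_le_m : (U_(i) <= m)%MM by rewrite lep1mP -lt0n.
by rewrite mcoeff_mderiv submK // mnmBE mnm1E eqxx subn1 prednK.
Qed.

End DegreeMultiplier.

Section DerivativeClosed.
Variables (R : numFieldType) (n : nat).
Implicit Types (p : {mpoly R[n]}) (m : 'X_{1..n}).

Lemma msize_mderiv_lt i p : p != 0 -> (msize (mderiv i p) < msize p)%N.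
Proof.
move=> p_nz; rewrite (mpolySpred _ p_nz) ltnS msizeE.
apply/bigmax_leqP_seq => m /msupp_mderiv m_p _.
rewrite -ltnS -(mpolySpred _ p_nz).
by move: (msize_mdeg_lt m_p); rewrite mdegD mdeg1 addn1.
Qed.

Lemma mderiv_neq0 i p m : m \in msupp p -> (0 < m i)%N -> mderiv i p != 0.
Proof.
move=> m_p m_i_gt0; apply: contraTneq m_p => di_p0.
have U_le_m : (U_(i) <= m)%MM by rewrite lep1mP -lt0n.
have := congr1 (mcoeff (m - U_(i))%MM) di_p0.
rewrite mcoeff_mderiv submK // mcoeff0 mnmBE mnm1E eqxx subn1 prednK //.
by move/eqP; rewrite mulrn_eq0 gtn_eqF //= mcoeff_msupp negbK.
Qed.

Lemma exists_mderiv_neq0 p : (1 < msize p)%N -> exists i, mderiv i p != 0.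
Proof.
move=> size_p; have p_nz : p != 0 by rewrite -(mmeasure_poly_eq0 mdeg) -lt0n ltnW.
have : (0 < mdeg (mlead p))%N by rewrite -ltnS mlead_deg.
rewrite lt0n mdeg_eq0 => /eqP mlead_nz.
have [i m_i_nz] : exists i, mlead p i != 0%N.
  case: (pickP (fun i => mlead p i != 0%N)) => [i|m0]; first by exists i.
  by case: mlead_nz; apply/mnmP => i; rewrite mnm0E; apply/eqP/negbFE/m0.
by exists i; apply: (mderiv_neq0 (mlead_supp p_nz)); rewrite lt0n.
Qed.

Lemma mderiv_closed_has1 (S : {mpoly R[n]} -> Prop) :
    (forall i p, S p -> S (mderiv i p)) -> (forall c p, S p -> S (c *: p)) ->
  forall p, p != 0 -> S p -> S 1.
Proof.
move=> S_mderiv S_scale p.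
elim: {p}(msize p).+1 {-2}p (ltnSn (msize p)) => // k IHk p size_p p_nz Sp.
have [size_le1|size_gt1] := leqP (msize p) 1; last first.
  have [i di_nz] := exists_mderiv_neq0 size_gt1.
  apply: (IHk (mderiv i p)) => //; last exact: S_mderiv.
  by rewrite -ltnS (leq_trans _ size_p) // ltnS msize_mderiv_lt.
have p_cst := msize1_polyC size_le1.
have c_nz : p@_0 != 0 by apply: contraNneq p_nz => c0; rewrite p_cst c0.
by have := S_scale (p@_0)^-1 _ Sp; rewrite {2}p_cst -alg_mpolyC scalerA mulVf ?scale1r.
Qed.

End DerivativeClosed.

Section Laplacian.
Variables (n : nat) (eta : 'M[C]_n).
Local Notation P := (Fpoly n).
Local Notation dup := (dup eta).
Local Notation laplace := (laplace eta).
Implicit Types (a b : 'I_n) (p q : P).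

HB.instance Definition _ a := GRing.isLinear.Build C P P _ (dpart a)
  (mderiv_is_linear a).

Lemma dup_is_linear a : linear (dup a).
Proof.
move=> c p q; rewrite /Defs.dup scaler_sumr -big_split; apply: eq_bigr => b _.
by rewrite linearP scalerDr !scalerA mulrC.
Qed.

HB.instance Definition _ a := GRing.isLinear.Build C P P _ (dup a)
  (dup_is_linear a).

Lemma laplace_is_linear : linear laplace.
Proof.
move=> c p q; rewrite /Defs.laplace scaler_sumr -big_split; apply: eq_bigr => a _.
rewrite scaler_sumr -big_split; apply: eq_bigr => b _.
by rewrite !linearP scalerA mulrC.
Qed.

HB.instance Definition _ := GRing.isLinear.Build C P P _ laplace
  laplace_is_linear.

Lemma laplaceE p : laplace p = \sum_a dpart a (dup a p).
Proof.
by apply: eq_bigr => a _; rewrite linear_sum; apply: eq_bigr => b _; rewrite linearZ.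
Qed.

Lemma laplaceE_dup p : laplace p = \sum_a dup a (dpart a p).
Proof.
by apply: eq_bigr => a _; apply: eq_bigr => b _; rewrite /dpart mderiv_comm.
Qed.

Lemma laplace_dpart a p : laplace (dpart a p) = dpart a (laplace p).
Proof.
rewrite /Defs.laplace linear_sum; apply: eq_bigr => b _.
rewrite linear_sum; apply: eq_bigr => c _.
by rewrite linearZ /dpart (mderiv_comm a c) (mderiv_comm a b).
Qed.

Lemma laplace_dup a p : laplace (dup a p) = dup a (laplace p).
Proof.
by rewrite /Defs.dup linear_sum; apply: eq_bigr => b _; rewrite linearZ /= laplace_dpart.
Qed.

Lemma laplace_degmul f p :
  laplace (degmul f p) = degmul (fun d => f d.+2) (laplace p).
Proof.
rewrite /Defs.laplace linear_sum; apply: eq_bigr => a _.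
rewrite linear_sum; apply: eq_bigr => b _.
by rewrite linearZ /dpart !mderiv_degmul.
Qed.

Lemma dpart_XM a b p : dpart b ('X_a * p) = (a == b)%:R *: p + 'X_a * dpart b p.
Proof.
rewrite /dpart mderivM mderivX mnm1E; congr (_ + _).
have [->|_] := eqVneq a b; last by rewrite !scale0r mul0r.
have -> : (U_(b) - U_(b))%MM = 0%MM by apply/mnmP => i; rewrite mnmBE subnn mnm0E.
by rewrite mpolyX0 -scalerAl mul1r.
Qed.

Definition Hval (d : nat) : C := - d%:R - n%:R / 2%:R.

Lemma Hop_degmul p : Hop p = degmul Hval p.
Proof.
rewrite /Hop; under eq_bigr do rewrite dpart_XM eqxx scale1r.
rewrite big_split /= big_split /= -/(euler p) sumr_const card_ord.
rewrite euler_degmul -[p *+ _]scaler_nat -[_ *: p]degmul_cst !degmulDl.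
rewrite -degmul_cst degmulK.
by apply: eq_degmul => d; rewrite /Hval; field.
Qed.

Lemma inv2H4E p : inv2H4 p = degmul (fun d => (2%:R * Hval d + 4%:R)^-1) p.
Proof. by []. Qed.

HB.instance Definition _ := GRing.isLinear.Build C P P _ (@inv2H4 n)
  (degmul_is_linear (fun d => (2%:R * Hval d + 4%:R)^-1)).

Lemma harmonic_dpart a p : harmonic eta p -> harmonic eta (dpart a p).
Proof. by rewrite /harmonic laplace_dpart => ->; rewrite linear0. Qed.

Lemma harmonic_degmul f p : harmonic eta p -> harmonic eta (degmul f p).
Proof. by rewrite /harmonic laplace_degmul => ->; rewrite linear0. Qed.

Lemma harmonic_Hop p : harmonic eta p -> harmonic eta (Hop p).
Proof. by rewrite Hop_degmul; apply: harmonic_degmul. Qed.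

Lemma harmonic_pihomog d p : harmonic eta p -> harmonic eta (pihomog mdeg d p).
Proof. by rewrite pihomog_degmul; apply: harmonic_degmul. Qed.

Definition rsq : P := \sum_b \sum_c eta b c *: ('X_b * 'X_c).

Lemma xtildeE a p : xtilde eta a p = 'X_a * p + inv2H4 (rsq * dup a p).
Proof.
rewrite /xtilde /rsq mulr_suml; congr (_ + inv2H4 _).
by apply: eq_bigr => b _; rewrite mulr_suml; apply: eq_bigr => c _; rewrite scalerAl.
Qed.

Lemma sum_xtilde_dpart h : harmonic eta h -> \sum_a xtilde eta a (dpart a h) = euler h.
Proof.
move=> harm_h; under eq_bigr do rewrite xtildeE.
rewrite big_split /= -[RHS]addr0; congr (_ + _).
by rewrite -linear_sum -mulr_sumr -laplaceE_dup harm_h mulr0 linear0.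
Qed.

End Laplacian.

Section SymmetricForm.
Variables (n : nat) (eta : 'M[C]_n).
Hypotheses (eta_sym : eta^T = eta) (eta_unit : eta \in unitmx).
Local Notation P := (Fpoly n).
Local Notation ei := (etainv eta).
Local Notation dup := (dup eta).
Local Notation laplace := (laplace eta).
Local Notation rsq := (rsq eta).
Implicit Types (a b c : 'I_n) (p q : P).

Lemma etaC b c : eta b c = eta c b.
Proof. by rewrite -{1}eta_sym mxE. Qed.

Lemma etainvC b c : ei b c = ei c b.
Proof. by rewrite -{1}eta_sym /etainv -trmx_inv mxE. Qed.

Lemma eta_etainv b c : \sum_e eta b e * ei e c = (b == c)%:R.
Proof. by have := congr1 (fun M : 'M_n => M b c) (mulmxV eta_unit); rewrite !mxE. Qed.

Lemma trace_eta_etainv : \sum_b \sum_c eta b c * ei b c = n%:R.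
Proof.
under eq_bigr do under eq_bigr do rewrite etainvC.
by under eq_bigr do rewrite eta_etainv eqxx; rewrite sumr_const card_ord.
Qed.

Lemma sum_eta_dup b p : \sum_c eta b c *: dup c p = dpart b p.
Proof.
rewrite /Defs.dup; under eq_bigr do rewrite scaler_sumr.
rewrite exchange_big /=.
under eq_bigr do (under eq_bigr do rewrite scalerA; rewrite -scaler_suml eta_etainv).
rewrite (bigD1 b) //= eqxx scale1r big1 ?addr0 // => e /negbTE.
by rewrite eq_sym => ->; rewrite scale0r.
Qed.

Lemma dup_XM b c q : dup b ('X_c * q) = ei b c *: q + 'X_c * dup b q.
Proof.
rewrite /Defs.dup; under eq_bigr do rewrite dpart_XM scalerDr scalerA.
rewrite big_split /= mulr_sumr; congr (_ + _).
  rewrite (bigD1 c) //= eqxx mulr1 big1 ?addr0 // => e /negbTE.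
  by rewrite eq_sym => ->; rewrite mulr0 scale0r.
by apply: eq_bigr => e _; rewrite scalerAr.
Qed.

Lemma laplace_XM a p : laplace ('X_a * p) = 'X_a * laplace p + 2%:R *: dup a p.
Proof.
rewrite laplaceE; under eq_bigr do rewrite dup_XM linearD /= dpart_XM linearZ /=.
rewrite big_split /= big_split /= -mulr_sumr -laplaceE.
have -> : \sum_b ei b a *: dpart b p = dup a p.
  by apply: eq_bigr => b _; rewrite etainvC.
rewrite [X in _ + (X + _)](bigD1 a) //= eqxx scale1r big1 ?addr0; last first.
  by move=> e /negbTE; rewrite eq_sym => ->; rewrite scale0r.
by rewrite scaler_nat mulr2n addrA addrC.
Qed.

Lemma laplace_rsqM q :
  laplace (rsq * q) = rsq * laplace q + 2%:R *: (euler q + n%:R *: q + euler q).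
Proof.
have expand b c : laplace (eta b c *: ('X_b * 'X_c) * q) =
    eta b c *: ('X_b * 'X_c) * laplace q + 2%:R *: ('X_b * (eta b c *: dup c q)
    + (eta b c * ei b c) *: q + 'X_c * (eta b c *: dup b q)).
  rewrite -scalerAl linearZ /= -mulrA !laplace_XM dup_XM -!mul_mpolyC !mpolyCM.
  ring.
rewrite /rsq !mulr_suml linear_sum /=.
under eq_bigr do rewrite mulr_suml linear_sum /=.
under eq_bigr do under eq_bigr do rewrite expand.
under eq_bigr do rewrite big_split /= -scaler_sumr.
rewrite big_split /= -scaler_sumr; congr (_ + _ *: _).
  by apply: eq_bigr => b _; rewrite mulr_suml.
under eq_bigr do rewrite !big_split /=.
rewrite !big_split /=; congr (_ + _ + _).
- by apply: eq_bigr => b _; rewrite -mulr_sumr sum_eta_dup.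
- by rewrite -trace_eta_etainv scaler_suml; apply: eq_bigr => b _; rewrite scaler_suml.
- rewrite exchange_big /=; apply: eq_bigr => c _; rewrite -mulr_sumr.
  congr (_ * _); rewrite -/(dpart c q) -sum_eta_dup.
  by apply: eq_bigr => b _; rewrite etaC.
Qed.

Lemma Hval_add2 d : 2%:R * Hval n d.+2 + 4%:R = - (d%:R + n%:R + d%:R).
Proof. by rewrite /Hval -addn2 natrD; field. Qed.

Lemma harmonic_xtilde a p :
  (0 < n)%N -> harmonic eta p -> harmonic eta (xtilde eta a p).
Proof.
move=> n_gt0 harm_p; have harm_dup : laplace (dup a p) = 0.
  by rewrite laplace_dup harm_p linear0.
have weight_nz d : (d%:R + n%:R + d%:R : C) != 0.
  by rewrite -!natrD pnatr_eq0 !addn_eq0 (negbTE (lt0n_neq0 n_gt0)) andbF.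
rewrite /harmonic xtildeE linearD /= laplace_XM harm_p mulr0 add0r inv2H4E.
rewrite laplace_degmul laplace_rsqM harm_dup mulr0 add0r linearZ /=.
rewrite euler_degmul -[n%:R *: _]degmul_cst !degmulDl degmulK.
rewrite (@eq_degmul _ _ _ (fun=> -1)) => [|d]; last first.
  by rewrite Hval_add2 invrN mulrN mulfV.
by rewrite degmul_cst scaleN1r scalerN subrr.
Qed.

End SymmetricForm.

Section Irreducible.
Variables (n : nat) (eta : 'M[C]_n) (S : Fpoly n -> Prop).
Hypotheses (S0 : S 0) (S_add : forall p q, S p -> S q -> S (p + q))
  (S_scale : forall c p, S p -> S (c *: p))
  (S_op : forall T p, inZ eta T -> S p -> S (T p)).

Lemma subspace_sum (I : Type) (r : seq I) (F : I -> Fpoly n) :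
  (forall i, S (F i)) -> S (\sum_(i <- r) F i).
Proof. by move=> SF; elim/big_rec: _ => // i p _; apply: S_add. Qed.

Lemma invariant_has_homog_harmonic d h : S 1 ->
  h \is d.-homog for mdeg -> harmonic eta h -> S h.
Proof.
move=> S1; elim: d h => [|d IHd] h h_homog harm_h.
  have -> : h = h@_0 *: 1.
    apply/mpolyP => m; rewrite mcoeffZ mcoeff1.
    have [->|m_nz] := eqVneq m 0%MM; first by rewrite mulr1.
    by rewrite mulr0 (dhomog_nemf_coeff h_homog) // mdeg_eq0.
  exact: S_scale.
have S_euler : S (euler h).
  rewrite -(sum_xtilde_dpart harm_h); apply: subspace_sum => a.
  apply: S_op (inZ_xt eta a) _; apply: IHd; last exact: harmonic_dpart.
  exact: mderiv_homog.
move: S_euler; rewrite euler_degmul (degmul_homog _ h_homog).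
move=> /(S_scale d.+1%:R^-1).
by rewrite scalerA mulVf ?scale1r // pnatr_eq0.
Qed.

End Irreducible.

Lemma harmonic_irreducible n (eta : 'M[C]_n) : Fplus_irreducible eta.
Proof.
move=> S [S0 S_add S_scale S_harm S_op].
have [[p0 [Sp0 /eqP p0_nz]]|S_trivial] := classic (exists p, S p /\ p <> 0); last first.
  left => p; split=> [Sp|->//]; apply: NNPP => p_nz.
  by apply: S_trivial; exists p.
right => p; split=> [/S_harm//|harm_p].
have S1 : S 1 :=
  mderiv_closed_has1 (fun i q => S_op _ q (inZ_d eta i)) S_scale p0_nz Sp0.
rewrite (pihomog_partitionE (mf := mdeg) (leqnn (msize p))).
apply: (subspace_sum S0 S_add) => d.
apply: (invariant_has_homog_harmonic S0 S_add S_scale S_op S1 (pihomogP _ _ _)).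
exact: harmonic_pihomog.
Qed.

Theorem mainTheorem10 (n : nat) (eta : 'M[C]_n) :
  (3 <= n)%N -> eta^T = eta -> eta \in unitmx ->
  [/\ (forall p, harmonic eta p -> harmonic eta (Hop p)),
      (forall a p, harmonic eta p -> harmonic eta (dpart a p)),
      (forall a p, harmonic eta p -> harmonic eta (xtilde eta a p))
    & Fplus_irreducible eta].
Proof.
move=> n_ge3 eta_sym eta_unit; split.
- exact: harmonic_Hop.
- exact: harmonic_dpart.
- by move=> a p; apply: harmonic_xtilde => //; apply: leq_trans n_ge3.
- exact: harmonic_irreducible.
Qed.
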